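(* Let $G$ be a finite simple graph. If $G$ has two distinct min-max clique coverings that both satisfy simple intersection, then $G$ contains $\mathrm{circ}(6,\{1,2\})$ as an induced subgraph.
   Context: A clique covering of $G$ is a set of cliques (vertex sets inducing complete subgraphs) such that every edge of $G$ lies in at least one of them. $\operatorname{cc}(G)$ denotes the minimum size of a clique covering. A min-max clique covering is a clique covering of size $\operatorname{cc}(G)$ in which every clique is a maximal clique of $G$. A clique covering $\{C_1,\dots,C_\ell\}$ has simple intersection if $C_i\cap C_j\cap C_k=\emptyset$ for all distinct $i,j,k$. The circulant graph $\mathrm{circ}(6,\{1,2\})$ has vertex set $\{0,\dots,5\}$ with $i$ adjacent to $i\pm1$ and $i\pm2 \pmod 6$; equivalently its vertices are the $2$-subsets of $\{1,2,3,4\}$, two being adjacent iff they intersect. *)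

From mathcomp Require Import all_boot.
Set Implicit Arguments. Unset Strict Implicit. Unset Printing Implicit Defensive.

Definition simple_graph (T : finType) (e : rel T) : Prop :=
  symmetric e /\ irreflexive e.

Definition is_clique (T : finType) (e : rel T) (C : {set T}) : Prop :=
  forall x y, x \in C -> y \in C -> x != y -> e x y.

Definition is_maximal_clique (T : finType) (e : rel T) (C : {set T}) : Prop :=
  is_clique e C /\ forall D : {set T}, is_clique e D -> C \subset D -> D = C.

Definition is_clique_covering (T : finType) (e : rel T) (P : {set {set T}}) : Prop :=
  (forall C, C \in P -> is_clique e C) /\
  (forall x y, e x y -> exists2 C, C \in P & (x \in C) && (y \in C)).

Definition is_cc (T : finType) (e : rel T) (k : nat) : Prop :=
  (exists P, is_clique_covering e P /\ #|P| = k) /\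
  (forall P, is_clique_covering e P -> k <= #|P|).

Definition is_minmax_clique_covering (T : finType) (e : rel T) (P : {set {set T}}) : Prop :=
  is_clique_covering e P /\ is_cc e #|P| /\
  (forall C, C \in P -> is_maximal_clique e C).

Definition simple_intersection (T : finType) (P : {set {set T}}) : Prop :=
  forall Ci Cj Ck, Ci \in P -> Cj \in P -> Ck \in P ->
    Ci != Cj -> Ci != Ck -> Cj != Ck -> Ci :&: Cj :&: Ck = set0.

Definition circ612 (i j : 'I_6) : bool :=
  ((j + 6 - i) %% 6 \in [:: 1; 2; 4; 5]).

Definition contains_induced_circ612 (T : finType) (e : rel T) : Prop :=
  exists f : 'I_6 -> T, injective f /\ forall i j, e (f i) (f j) = circ612 i j.

From mathcomp Require Import all_boot.

Set Implicit Arguments.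
Unset Strict Implicit.
Unset Printing Implicit Defensive.

(* Take C in P but not in Q, and two vertices of C.  Since Q has simple
   intersection, any two Q-cliques through a vertex of C cover C.  This yields
   u, a, b in C and Q-cliques D1 (through u, a), D2 (through u, b) and
   D3 (through a, b), pairwise covering C.  Maximality of C gives vertices
   x_i in D_i outside C, none of which lies in two of the D_i.  Simple
   intersection of P makes x1, x2, x3 pairwise adjacent, and simple
   intersection of Q separates u from x3, a from x2 and b from x1: the six
   vertices induce the octahedron circ(6,{1,2}). *)

Section CliqueCoverings.
Variables (T : finType) (e : rel T).

Lemma simple_intersection_shared (P : {set {set T}}) x A B D :
  simple_intersection P -> A \in P -> B \in P -> D \in P -> A != B ->
  x \in A -> x \in B -> x \in D -> D = A \/ D = B.
Proof.
move=> Psi AP BP DP AB xA xB xD.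
case: (eqVneq D A) => [->|DA]; first by left.
case: (eqVneq D B) => [->|DB]; first by right.
have : x \in A :&: B :&: D by rewrite !inE xA xB xD.
by rewrite Psi ?inE // eq_sym.
Qed.

Lemma maximal_clique_not_subset C D :
  is_clique e C -> is_maximal_clique e D -> D != C -> exists2 x, x \in D & x \notin C.
Proof.
move=> Ccl [_ Dmax] DC; apply/subsetPn; apply: contra DC => DsubC.
by rewrite (Dmax C Ccl DsubC).
Qed.

Lemma maximal_clique_sub_cover2 C D1 D2 x :
  is_maximal_clique e C -> is_clique e D1 -> is_clique e D2 ->
  C \subset D1 :|: D2 -> x \in D1 -> x \in D2 -> x \in C.
Proof.
move=> [Ccl Cmax] D1cl D2cl /subsetP CD xD1 xD2.
have adj c : c \in C -> x != c -> e x c && e c x.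
  move=> cC xc; have cx : c != x by rewrite eq_sym.
  by case/setUP: (CD c cC) => cD; [rewrite !D1cl | rewrite !D2cl].
have xCcl : is_clique e (x |: C).
  move=> y z; rewrite !inE => /orP [/eqP->|yC] /orP [/eqP->|zC] yz.
  - by rewrite eqxx in yz.
  - by case/andP: (adj z zC yz).
  - by rewrite eq_sym in yz; case/andP: (adj y yC yz).
  - exact: Ccl.
by rewrite -(Cmax _ xCcl (subsetUr _ _)) setU11.
Qed.

Lemma minimum_covering_member_gt1 P C :
  irreflexive e -> is_clique_covering e P -> is_cc e #|P| -> C \in P -> 1 < #|C|.
Proof.
move=> eirr [Pcl Pcov] [_ Pmin] CP; rewrite ltnNge; apply/negP => /card_le1P C1.
have cov : is_clique_covering e (P :\ C).
  split=> [D /setD1P [_]|x y exy]; first exact: Pcl.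
  have [D DP /andP [xD yD]] := Pcov x y exy.
  exists D; last by rewrite xD yD.
  rewrite !inE DP andbT; apply: contraTneq exy => DC; subst D.
  by move: (C1 x xD y); rewrite yD inE => /esym /eqP ->; rewrite eirr.
by have := Pmin _ cov; rewrite (cardsD1 C P) CP ltnn.
Qed.

Lemma minmax_covering_not_subset P Q :
  is_minmax_clique_covering e P -> is_minmax_clique_covering e Q -> P != Q ->
  exists2 C, C \in P & C \notin Q.
Proof.
move=> [Pcov _] [_ [Qcc _]] PQ; apply/subsetPn; apply: contra PQ => PsubQ.
by rewrite eqEcard PsubQ (Qcc.2 _ Pcov).
Qed.

Lemma clique_sub_cover_through Q C u D1 D2 :
  is_clique_covering e Q -> simple_intersection Q -> is_clique e C ->
  D1 \in Q -> D2 \in Q -> D1 != D2 -> u \in C -> u \in D1 -> u \in D2 ->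
  C \subset D1 :|: D2.
Proof.
move=> [_ Qcov] Qsi Ccl D1Q D2Q D12 uC uD1 uD2; apply/subsetP => c cC.
rewrite inE; case: (eqVneq c u) => [->|cu]; first by rewrite uD1.
rewrite eq_sym in cu.
have [D DQ /andP [uD cD]] := Qcov u c (Ccl u c uC cC cu).
by case: (simple_intersection_shared Qsi D1Q D2Q DQ D12 uD1 uD2 uD) => <-;
  rewrite cD ?orbT.
Qed.

Lemma simple_intersection_neighbours_adj P C y x x' :
  is_clique_covering e P -> simple_intersection P -> C \in P ->
  y \in C -> x \notin C -> x' \notin C -> x != x' -> e y x -> e y x' -> e x x'.
Proof.
move=> [Pcl Pcov] Psi CP yC xC x'C xx' eyx eyx'.
have [E EP /andP [yE xE]] := Pcov y x eyx.
have [E' E'P /andP [yE' x'E']] := Pcov y x' eyx'.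
have CE : C != E by apply: contraNneq xC => ->.
case: (simple_intersection_shared Psi CP EP E'P CE yC yE yE') => E'E.
- by move: x'C; rewrite -E'E x'E'.
- by apply: (Pcl E EP) => //; rewrite -E'E.
Qed.

Lemma simple_intersection_nonadj Q C u x D1 D2 D3 :
  is_clique_covering e Q -> simple_intersection Q -> is_maximal_clique e C ->
  D1 \in Q -> D2 \in Q -> D3 \in Q -> D1 != D2 -> u \in D1 -> u \in D2 ->
  C \subset D1 :|: D3 -> C \subset D2 :|: D3 -> x \in D3 -> x \notin C -> ~~ e u x.
Proof.
move=> [Qcl Qcov] Qsi Cmax D1Q D2Q D3Q D12 uD1 uD2 CD13 CD23 xD3 xC.
apply/negP => eux; apply: (negP xC).
have [D DQ /andP [uD xD]] := Qcov u x eux.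
case: (simple_intersection_shared Qsi D1Q D2Q DQ D12 uD1 uD2 uD) => DE;
  rewrite DE in xD.
- exact: maximal_clique_sub_cover2 Cmax (Qcl _ D1Q) (Qcl _ D3Q) CD13 xD xD3.
- exact: maximal_clique_sub_cover2 Cmax (Qcl _ D2Q) (Qcl _ D3Q) CD23 xD xD3.
Qed.

Lemma injective_of_adjacency (U : finType) (h : rel U) (f : U -> T) :
  irreflexive e -> (forall i j, e (f i) (f j) = h i j) ->
  (forall i j, i != j -> ~~ h i j -> f i != f j) -> injective f.
Proof.
move=> eirr fh fnh i j fij; case: (eqVneq i j) => // ij.
by move: (fnh i j ij); rewrite -fh fij eirr eqxx => /(_ isT).
Qed.

End CliqueCoverings.

Section Octahedron.
Variables (T : finType) (e : rel T) (P Q : {set {set T}}) (C D1 D2 D3 : {set T}).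
Variables (u a b x1 x2 x3 : T).
Hypotheses (esym : symmetric e) (eirr : irreflexive e).
Hypotheses (Pcov : is_clique_covering e P) (Psi : simple_intersection P) (CP : C \in P).
Hypotheses (Qcov : is_clique_covering e Q) (Qsi : simple_intersection Q).
Hypotheses (Cmax : is_maximal_clique e C).
Hypotheses (D1Q : D1 \in Q) (D2Q : D2 \in Q) (D3Q : D3 \in Q).
Hypotheses (uC : u \in C) (aC : a \in C) (bC : b \in C).
Hypotheses (uD1 : u \in D1) (aD1 : a \in D1) (bD1 : b \notin D1).
Hypotheses (uD2 : u \in D2) (bD2 : b \in D2) (aD2 : a \notin D2).
Hypotheses (aD3 : a \in D3) (bD3 : b \in D3).
Hypotheses (x1D1 : x1 \in D1) (x2D2 : x2 \in D2) (x3D3 : x3 \in D3).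
Hypotheses (x1C : x1 \notin C) (x2C : x2 \notin C) (x3C : x3 \notin C).

Let Qcl := Qcov.1.
Let D12 : D1 != D2. Proof. by apply: contraNneq bD1 => ->. Qed.
Let D13 : D1 != D3. Proof. by apply: contraNneq bD1 => ->. Qed.
Let D23 : D2 != D3. Proof. by apply: contraNneq aD2 => ->. Qed.
Let CD12 := clique_sub_cover_through Qcov Qsi Cmax.1 D1Q D2Q D12 uC uD1 uD2.
Let CD13 := clique_sub_cover_through Qcov Qsi Cmax.1 D1Q D3Q D13 aC aD1 aD3.
Let CD23 := clique_sub_cover_through Qcov Qsi Cmax.1 D2Q D3Q D23 bC bD2 bD3.

Lemma octahedron_nonadj : [/\ ~~ e u x3, ~~ e a x2 & ~~ e b x1].
Proof.
split; [ apply: (simple_intersection_nonadj Qcov Qsi Cmax D1Q D2Q D3Q)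
       | apply: (simple_intersection_nonadj Qcov Qsi Cmax D1Q D3Q D2Q)
       | apply: (simple_intersection_nonadj Qcov Qsi Cmax D2Q D3Q D1Q) ];
  by rewrite // setUC.
Qed.

Lemma octahedron_outer_distinct : [/\ x1 != x2, x1 != x3 & x2 != x3].
Proof.
have inC D D' x : D \in Q -> D' \in Q -> C \subset D :|: D' -> x \in D -> x \in D' -> x \in C.
  by move=> DQ D'Q; apply: maximal_clique_sub_cover2 Cmax (Qcl DQ) (Qcl D'Q).
split.
- by apply: contraNneq x2C => x12; apply: (inC D1 D2); rewrite // -x12.
- by apply: contraNneq x3C => x13; apply: (inC D1 D3); rewrite // -x13.
- by apply: contraNneq x3C => x23; apply: (inC D2 D3); rewrite // -x23.
Qed.

Let sep y x : y \in C -> x \notin C -> y != x.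
Proof. by move=> yC; apply: contraNneq => <-. Qed.

Let cross_adj D y x : D \in Q -> y \in D -> x \in D -> y \in C -> x \notin C -> e y x.
Proof. by move=> DQ yD xD yC xC; apply: (Qcl DQ) => //; apply: sep. Qed.

Lemma octahedron_outer_adj : [/\ e x1 x2, e x1 x3 & e x2 x3].
Proof.
have [x12 x13 x23] := octahedron_outer_distinct.
have adj := simple_intersection_neighbours_adj Pcov Psi CP.
split.
- exact: adj uC x1C x2C x12 (cross_adj D1Q uD1 x1D1 uC x1C) (cross_adj D2Q uD2 x2D2 uC x2C).
- exact: adj aC x1C x3C x13 (cross_adj D1Q aD1 x1D1 aC x1C) (cross_adj D3Q aD3 x3D3 aC x3C).
- exact: adj bC x2C x3C x23 (cross_adj D2Q bD2 x2D2 bC x2C) (cross_adj D3Q bD3 x3D3 bC x3C).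
Qed.

Lemma octahedron_induces_circ612 : contains_induced_circ612 e.
Proof.
have [Nux3 Nax2 Nbx1] := octahedron_nonadj.
have [Ex12 Ex13 Ex23] := octahedron_outer_adj.
have Eua : e u a by apply: (Qcl D1Q) => //; apply: contraNneq aD2 => <-.
have Eub : e u b by apply: (Qcl D2Q) => //; apply: contraNneq bD1 => <-.
have Eab : e a b by apply: (Qcl D3Q) => //; apply: contraNneq aD2 => ->.
have adjE := (Eua, Eub, Eab, Ex12, Ex13, Ex23, negbTE Nux3, negbTE Nax2, negbTE Nbx1,
  cross_adj D1Q uD1 x1D1 uC x1C, cross_adj D2Q uD2 x2D2 uC x2C,
  cross_adj D1Q aD1 x1D1 aC x1C, cross_adj D3Q aD3 x3D3 aC x3C,
  cross_adj D2Q bD2 x2D2 bC x2C, cross_adj D3Q bD3 x3D3 bC x3C).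
have neqE := (sep uC x3C, sep aC x2C, sep bC x1C).
(* The non-adjacent pairs of circ(6,{1,2}) are {0,3}, {1,4} and {2,5}. *)
pose f (i : 'I_6) := nth u [:: u; a; b; x3; x2; x1] i.
have fE i j : e (f i) (f j) = circ612 i j.
  by case: i j => [[|[|[|[|[|[|//]]]]]] ?] [[|[|[|[|[|[|//]]]]]] ?];
    rewrite /f /= ?eirr ?adjE // esym ?adjE.
exists f; split => //; apply: injective_of_adjacency eirr fE _.
by case=> [[|[|[|[|[|[|//]]]]]] ?] [[|[|[|[|[|[|//]]]]]] ?] //= _ _;
  rewrite /f /= ?neqE // eq_sym ?neqE.
Qed.

End Octahedron.

Lemma maximal_clique_off_covering_circ612 (T : finType) (e : rel T)
    (P Q : {set {set T}}) (C : {set T}) :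
  simple_graph e -> is_clique_covering e P -> simple_intersection P -> C \in P ->
  is_maximal_clique e C -> 1 < #|C| ->
  is_clique_covering e Q -> simple_intersection Q ->
  (forall D, D \in Q -> is_maximal_clique e D) -> C \notin Q ->
  contains_induced_circ612 e.
Proof.
move=> [esym eirr] Pcov Psi CP Cmax /card_gt1P [u [w [uC wC uw]]] Qcov Qsi Qmax CQ.
have [Qcl Qcover] := Qcov.
have DC D : D \in Q -> D != C by move=> DQ; apply: contraNneq CQ => <-.
have CD D : D \in Q -> C != D by rewrite eq_sym; apply: DC.
have [D1 D1Q /andP [uD1 _]] := Qcover u w (Cmax.1 u w uC wC uw).
have [b bC bD1] := maximal_clique_not_subset (Qcl D1 D1Q) Cmax (CD D1 D1Q).
have ub : u != b by apply: contraNneq bD1 => <-.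
have [D2 D2Q /andP [uD2 bD2]] := Qcover u b (Cmax.1 u b uC bC ub).
have [a aC aD2] := maximal_clique_not_subset (Qcl D2 D2Q) Cmax (CD D2 D2Q).
have D12 : D1 != D2 by apply: contraNneq bD1 => ->.
have aD1 : a \in D1.
  have /subsetP/(_ a aC) := clique_sub_cover_through Qcov Qsi Cmax.1 D1Q D2Q D12 uC uD1 uD2.
  by rewrite inE (negbTE aD2) orbF.
have ab : a != b by apply: contraNneq aD2 => ->.
have [D3 D3Q /andP [aD3 bD3]] := Qcover a b (Cmax.1 a b aC bC ab).
have [x1 x1D1 x1C] := maximal_clique_not_subset Cmax.1 (Qmax D1 D1Q) (DC D1 D1Q).
have [x2 x2D2 x2C] := maximal_clique_not_subset Cmax.1 (Qmax D2 D2Q) (DC D2 D2Q).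
have [x3 x3D3 x3C] := maximal_clique_not_subset Cmax.1 (Qmax D3 D3Q) (DC D3 D3Q).
exact: octahedron_induces_circ612 esym eirr Pcov Psi CP Qcov Qsi Cmax D1Q D2Q D3Q
  uC aC bC uD1 aD1 bD1 uD2 bD2 aD2 aD3 bD3 x1D1 x2D2 x3D3 x1C x2C x3C.
Qed.

Theorem mainTheorem1 (T : finType) (e : rel T) :
  simple_graph e ->
  forall P Q : {set {set T}},
    is_minmax_clique_covering e P -> simple_intersection P ->
    is_minmax_clique_covering e Q -> simple_intersection Q ->
    P != Q ->
    contains_induced_circ612 e.
Proof.
move=> Ge P Q Pmm Psi Qmm Qsi PQ.
have [C CP CQ] := minmax_covering_not_subset Pmm Qmm PQ.
have [Pcov [Pcc Pmax]] := Pmm; have [Qcov [_ Qmax]] := Qmm.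
have C_gt1 : 1 < #|C| := minimum_covering_member_gt1 Ge.2 Pcov Pcc CP.
exact: maximal_clique_off_covering_circ612 Ge Pcov Psi CP (Pmax C CP) C_gt1 Qcov Qsi Qmax CQ.
Qed.
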